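(* If there is a derivation in system $\mathcal L$ of $\Gamma\vdash M$, then there is a derivation in $\mathcal L$ of the same sequent whose length is at most $|St(\Gamma\cup\{M\})|$ (the cardinality of $St(\Gamma\cup\{M\})$).
   Context: Fix names, variables and constructors $\mathsf{pub}$ (unary), $\mathsf{sign},\mathsf{blind},\langle\cdot,\cdot\rangle,\{\cdot\}_\cdot$ (binary). $E$ is an equational theory with signature $\Sigma_E$ disjoint from the constructors, with at most one associative-commutative (AC) binary symbol $\oplus$, presented by a rewrite system $R_E$ terminating and confluent modulo AC. Terms are ground terms over names, the constructors and $\Sigma_E$. $\equiv$ is equality modulo AC, $\approx_E$ equality modulo $E$. Guarded term: a name, a variable, or headed by a constructor. $E$-context: term with holes built only from symbols of $\Sigma_E$. Sequents $\Gamma\vdash M$ have all terms in normal form; $\Gamma,M$ means $\Gamma\cup\{M\}$. $\Gamma\Vdash_{\mathcal R}M$ means $\Gamma\vdash M$ is derivable using only: (id) $\Gamma\vdash M$ if $M\approx_E C[M_1,\dots,M_k]$ for an $E$-context $C$ and $M_i\in\Gamma$; and the right rules: from $\Gamma\vdash M$ and $\Gamma\vdash N$ infer $\Gamma\vdash\langle M,N\rangle$; from $\Gamma\vdash M$ and $\Gamma\vdash K$ infer $\Gamma\vdash\{M\}_K$, resp. $\Gamma\vdash\mathsf{sign}(M,K)$, resp. $\Gamma\vdash\mathsf{blind}(M,K)$. System $\mathcal L$ (all rules except $r$ have a single premise, so derivations are linear sequences of sequents): ($r$) $\Gamma\vdash M$ with no premise if $\Gamma\Vdash_{\mathcal R}M$;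 ($lp$) from $\Gamma,\langle M,N\rangle,M,N\vdash T$ infer $\Gamma,\langle M,N\rangle\vdash T$; ($le$) from $\Gamma,\{M\}_K,M,K\vdash N$ infer $\Gamma,\{M\}_K\vdash N$ if $\Gamma,\{M\}_K\Vdash_{\mathcal R}K$; ($\mathsf{sign}$) from $\Gamma,\mathsf{sign}(M,K),\mathsf{pub}(L),M\vdash N$ infer $\Gamma,\mathsf{sign}(M,K),\mathsf{pub}(L)\vdash N$ if $K\equiv L$; ($\mathsf{blind}_1$) from $\Gamma,\mathsf{blind}(M,K),M,K\vdash N$ infer $\Gamma,\mathsf{blind}(M,K)\vdash N$ if $\Gamma,\mathsf{blind}(M,K)\Vdash_{\mathcal R}K$; ($\mathsf{blind}_2$) from $\Gamma,\mathsf{sign}(\mathsf{blind}(M,R),K),\mathsf{sign}(M,K),R\vdash N$ infer $\Gamma,\mathsf{sign}(\mathsf{blind}(M,R),K)\vdash N$ if $\Gamma,\mathsf{sign}(\mathsf{blind}(M,R),K)\Vdash_{\mathcal R}R$; ($ls$) from $\Gamma,A\vdash M$ infer $\Gamma\vdash M$ if $A$ is a guarded subterm of a term in $\Gamma\cup\{M\}$ and $\Gamma\Vdash_{\mathcal R}A$. The length of a derivation is the number of rule applications on its (single) branch. For a set of terms $\Delta$: $pst(\Delta)$ is the set of proper subterms of terms in $\Delta$; $sst(\Delta)=\{\mathsf{sign}(M,N)\mid M,N\in pst(\Delta)\}$; $St(\Delta)=\Delta\cup pst(\Delta)\cup sst(\Delta)$. *)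

From Stdlib Require Import List Arith Relations.
Import ListNotations.
Set Implicit Arguments.

(* Terms over names, variables, the constructors and Sigma_E.
   Sigma_E is an arbitrary type F of function symbols (with an arity),
   hence disjoint from the constructors. *)
Inductive term (F : Type) : Type :=
| Name  : nat -> term F
| Var   : nat -> term F
| Pub   : term F -> term F
| Sign  : term F -> term F -> term F
| Blind : term F -> term F -> term F
| Pair  : term F -> term F -> term F
| Enc   : term F -> term F -> term F
| Fun   : F -> list (term F) -> term F.

Arguments Name {F}. Arguments Var {F}. Arguments Pub {F}. Arguments Sign {F}.
Arguments Blind {F}. Arguments Pair {F}. Arguments Enc {F}. Arguments Fun {F}.

Section Theory.
Variable F : Type.
Variable arity : F -> nat.
(* at most one AC symbol *)
Variable oplus : option F.
Variable R : term F -> term F -> Prop.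

Local Notation term := (term F).

Definition imm (c t : term) : Prop :=
  match t with
  | Pub a => c = a
  | Sign a b | Blind a b | Pair a b | Enc a b => c = a \/ c = b
  | Fun _ args => In c args
  | _ => False
  end.

Inductive psubterm : term -> term -> Prop :=
| ps_imm c t : imm c t -> psubterm c t
| ps_trans s c t : psubterm s c -> imm c t -> psubterm s t.

Definition subterm (s t : term) : Prop := s = t \/ psubterm s t.

Inductive wf : term -> Prop :=
| wf_name n : wf (Name n)
| wf_var x : wf (Var x)
| wf_pub a : wf a -> wf (Pub a)
| wf_sign a b : wf a -> wf b -> wf (Sign a b)
| wf_blind a b : wf a -> wf b -> wf (Blind a b)
| wf_pair a b : wf a -> wf b -> wf (Pair a b)
| wf_enc a b : wf a -> wf b -> wf (Enc a b)
| wf_fun f args : length args = arity f -> (forall a, In a args -> wf a) ->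
    wf (Fun f args).

Definition ground (t : term) : Prop := forall x, ~ subterm (Var x) t.

Definition sigE_term (t : term) : Prop :=
  wf t /\ forall s, subterm s t ->
    (exists x, s = Var x) \/ (exists f args, s = Fun f args).

Fixpoint subst (sigma : nat -> term) (t : term) : term :=
  match t with
  | Name n => Name n
  | Var x => sigma x
  | Pub a => Pub (subst sigma a)
  | Sign a b => Sign (subst sigma a) (subst sigma b)
  | Blind a b => Blind (subst sigma a) (subst sigma b)
  | Pair a b => Pair (subst sigma a) (subst sigma b)
  | Enc a b => Enc (subst sigma a) (subst sigma b)
  | Fun f args => Fun f (map (subst sigma) args)
  end.

Inductive ACeq : term -> term -> Prop :=
| ac_refl t : ACeq t t
| ac_sym s t : ACeq s t -> ACeq t s
| ac_trans s t u : ACeq s t -> ACeq t u -> ACeq s u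
| ac_comm f x y : oplus = Some f -> ACeq (Fun f [x; y]) (Fun f [y; x])
| ac_assoc f x y z : oplus = Some f ->
    ACeq (Fun f [Fun f [x; y]; z]) (Fun f [x; Fun f [y; z]])
| ac_pub a a' : ACeq a a' -> ACeq (Pub a) (Pub a')
| ac_sign a a' b b' : ACeq a a' -> ACeq b b' -> ACeq (Sign a b) (Sign a' b')
| ac_blind a a' b b' : ACeq a a' -> ACeq b b' -> ACeq (Blind a b) (Blind a' b')
| ac_pair a a' b b' : ACeq a a' -> ACeq b b' -> ACeq (Pair a b) (Pair a' b')
| ac_enc a a' b b' : ACeq a a' -> ACeq b b' -> ACeq (Enc a b) (Enc a' b')
| ac_fun f l1 a a' l2 : ACeq a a' ->
    ACeq (Fun f (l1 ++ a :: l2)) (Fun f (l1 ++ a' :: l2)).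

Inductive rstep : term -> term -> Prop :=
| rs_root l r sigma : R l r -> rstep (subst sigma l) (subst sigma r)
| rs_pub a a' : rstep a a' -> rstep (Pub a) (Pub a')
| rs_sign1 a a' b : rstep a a' -> rstep (Sign a b) (Sign a' b)
| rs_sign2 a b b' : rstep b b' -> rstep (Sign a b) (Sign a b')
| rs_blind1 a a' b : rstep a a' -> rstep (Blind a b) (Blind a' b)
| rs_blind2 a b b' : rstep b b' -> rstep (Blind a b) (Blind a b')
| rs_pair1 a a' b : rstep a a' -> rstep (Pair a b) (Pair a' b)
| rs_pair2 a b b' : rstep b b' -> rstep (Pair a b) (Pair a b')
| rs_enc1 a a' b : rstep a a' -> rstep (Enc a b) (Enc a' b)
| rs_enc2 a b b' : rstep b b' -> rstep (Enc a b) (Enc a b')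
| rs_fun f l1 a a' l2 : rstep a a' ->
    rstep (Fun f (l1 ++ a :: l2)) (Fun f (l1 ++ a' :: l2)).

Definition rstepAC (s t : term) : Prop :=
  exists s' t', ACeq s s' /\ rstep s' t' /\ ACeq t' t.

Definition normal (t : term) : Prop := ~ exists t', rstepAC t t'.

Definition Eeq : term -> term -> Prop :=
  clos_refl_sym_trans term (fun s t => ACeq s t \/ rstep s t).

Definition is_rewrite_rule (l r : term) : Prop :=
  sigE_term l /\ sigE_term r /\ (forall x, l <> Var x) /\
  (forall x, subterm (Var x) r -> subterm (Var x) l).

Definition terminating_AC : Prop := well_founded (fun t s => rstepAC s t).

Definition confluent_AC : Prop :=
  forall t t1 t2,
    clos_refl_trans term rstepAC t t1 -> clos_refl_trans term rstepAC t t2 ->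
    exists u1 u2, clos_refl_trans term rstepAC t1 u1 /\
                  clos_refl_trans term rstepAC t2 u2 /\ ACeq u1 u2.

(* sets of terms as lists; Gamma' = Gamma U extra *)
Definition set_ext (G' G extra : list term) : Prop :=
  forall t, In t G' <-> In t G \/ In t extra.

Inductive Rder (G : list term) : term -> Prop :=
| R_id M C (sigma : nat -> term) :
    sigE_term C ->
    (forall x, subterm (Var x) C -> In (sigma x) G) ->
    Eeq M (subst sigma C) -> Rder G M
| R_pair M N : Rder G M -> Rder G N -> Rder G (Pair M N)
| R_enc M K : Rder G M -> Rder G K -> Rder G (Enc M K)
| R_sign M K : Rder G M -> Rder G K -> Rder G (Sign M K)
| R_blind M K : Rder G M -> Rder G K -> Rder G (Blind M K).

Definition guarded (t : term) : Prop :=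
  match t with Fun _ _ => False | _ => True end.

(* one-premise rules of L: conclusion G |- T, premise G' |- T *)
Inductive Lstep (G G' : list term) (T : term) : Prop :=
| L_lp M N : In (Pair M N) G -> set_ext G' G [M; N] -> Lstep G G' T
| L_le M K : In (Enc M K) G -> Rder G K -> set_ext G' G [M; K] -> Lstep G G' T
| L_sign M K L : In (Sign M K) G -> In (Pub L) G -> ACeq K L ->
    set_ext G' G [M] -> Lstep G G' T
| L_blind1 M K : In (Blind M K) G -> Rder G K -> set_ext G' G [M; K] ->
    Lstep G G' T
| L_blind2 M Rr K : In (Sign (Blind M Rr) K) G -> Rder G Rr ->
    set_ext G' G [Sign M K; Rr] -> Lstep G G' T
| L_ls A : guarded A -> (exists u, (In u G \/ u = T) /\ subterm A u) ->
    Rder G A -> set_ext G' G [A] -> Lstep G G' T.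

Definition seq_ok (G : list term) (T : term) : Prop :=
  forall t, In t G \/ t = T -> wf t /\ ground t /\ normal t.

Inductive Lderiv : list term -> term -> nat -> Prop :=
| Ld_r G T : seq_ok G T -> Rder G T -> Lderiv G T 1
| Ld_step G G' T n : seq_ok G T -> Lstep G G' T -> Lderiv G' T n ->
    Lderiv G T (S n).

Definition pst (D : list term) (t : term) : Prop :=
  exists u, In u D /\ psubterm t u.
Definition St (D : list term) (t : term) : Prop :=
  In t D \/ pst D t \/ (exists a b, pst D a /\ pst D b /\ t = Sign a b).

End Theory.

(* Every term a rule of L adds to the context lies in St(Gamma, M).  A step
   adding nothing new can be cut out; after the cuts every step strictly
   enlarges the part of St(Gamma, M) present in the context, so there are at
   most |St| - |Gamma| of them before the final rule r, which settles the case
   of a nonempty Gamma.  When Gamma is empty, every added term is strictly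
   smaller than M unless an (ls) step adds M itself, in which case M is
   already R-derivable; so M never enters the context and the count saves one
   element of St. *)

From Stdlib Require Import List Arith.
From Stdlib Require Import Bool Lia Classical ClassicalEpsilon.
Import ListNotations.
Set Implicit Arguments.

Section Counting.
Variable A : Type.

Definition memb (G : list A) (t : A) : bool :=
  if excluded_middle_informative (In t G) then true else false.

Definition count_in (l G : list A) : nat := length (filter (memb G) l).

Lemma membP (G : list A) t : memb G t = true <-> In t G.
Proof. unfold memb; destruct excluded_middle_informative; intuition discriminate. Qed.

Lemma filter_length_mono (p q : A -> bool) l :
  (forall x, p x = true -> q x = true) -> length (filter p l) <= length (filter q l).
Proof.
  intros Hpq; induction l as [|a l IH]; simpl; auto.
  destruct (p a) eqn:Ea; [rewrite (Hpq a Ea)|destruct (q a)]; simpl; lia.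
Qed.

Lemma filter_length_lt (p q : A -> bool) l e :
  (forall x, p x = true -> q x = true) -> In e l -> q e = true -> p e = false ->
  length (filter p l) < length (filter q l).
Proof.
  intros Hpq; induction l as [|a l IH]; simpl; [tauto|].
  intros [<-|Hin] Hq Hp.
  - rewrite Hp, Hq; simpl. pose proof (filter_length_mono p q l Hpq); lia.
  - specialize (IH Hin Hq Hp).
    destruct (p a) eqn:Ea; [rewrite (Hpq a Ea)|destruct (q a)]; simpl; lia.
Qed.

Lemma count_in_le_length (l G : list A) : count_in l G <= length l.
Proof. apply filter_length_le. Qed.

Lemma count_in_lt (l G H : list A) e :
  incl G H -> In e l -> In e H -> ~ In e G -> count_in l G < count_in l H.
Proof.
  intros HGH Hl HH HG; apply filter_length_lt with e; auto.
  - intros x Hx; apply membP, HGH, membP; auto.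
  - apply membP; auto.
  - apply not_true_iff_false; rewrite membP; auto.
Qed.

Lemma count_in_ext (l G H : list A) :
  (forall t, In t G <-> In t H) -> count_in l G = count_in l H.
Proof.
  intros E; unfold count_in; f_equal; apply filter_ext; intros a.
  apply eq_true_iff_eq; rewrite !membP; auto.
Qed.

Lemma count_in_lt_length (l G : list A) e : In e l -> ~ In e G -> count_in l G < length l.
Proof.
  intros Hl HG.
  pose proof (count_in_le_length l (e :: G)).
  assert (count_in l G < count_in l (e :: G)); [|lia].
  apply count_in_lt with e; simpl; auto. intros x Hx; simpl; auto.
Qed.

Lemma count_in_pos (l G : list A) e : In e l -> In e G -> 0 < count_in l G.
Proof.
  intros Hl HG. apply Nat.le_lt_trans with (count_in l []); [lia|].
  apply count_in_lt with e; auto; intros x [].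
Qed.

End Counting.

Section Subterms.
Variable F : Type.
Local Notation term := (term F).

Lemma psubterm_trans (s c t : term) : psubterm s c -> psubterm c t -> psubterm s t.
Proof.
  intros Hsc Hct; induction Hct as [c t Hi|c' c t _ IH Hi].
  - exact (ps_trans _ Hsc Hi).
  - exact (ps_trans _ (IH Hsc) Hi).
Qed.

Lemma psubterm_imm_inv (s t : term) :
  psubterm s t -> exists c, imm c t /\ (s = c \/ psubterm s c).
Proof. induction 1; eauto. Qed.

Lemma pst_psubterm (D : list term) a s : pst D a -> psubterm s a -> pst D s.
Proof. intros [u [Hu Hp]] Hs; exists u; split; auto; eapply psubterm_trans; eauto. Qed.

Lemma St_psubterm (D : list term) t s : St D t -> psubterm s t -> St D s.
Proof.
  intros [Hin|[Hp|[a [b [Ha [Hb ->]]]]]] Hs.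
  - right; left; exists t; auto.
  - right; left; eapply pst_psubterm; eauto.
  - right; left. destruct (psubterm_imm_inv Hs) as [c [[->| ->] [->|Hc]]];
      eauto using pst_psubterm.
Qed.

Lemma St_subterm (D : list term) t s : St D t -> subterm s t -> St D s.
Proof. intros H [->|Hs]; eauto using St_psubterm. Qed.

Lemma St_sign_unblind (D : list term) M Rr K :
  St D (Sign (Blind M Rr) K) -> St D (Sign M K).
Proof.
  assert (HM : psubterm M (Sign (Blind M Rr) K)).
  { apply (@ps_trans _ M (Blind M Rr)); [apply ps_imm|]; simpl; auto. }
  assert (HK : psubterm K (Sign (Blind M Rr) K)) by (apply ps_imm; simpl; auto).
  intros [Hin|[Hp|[a [b [Ha [Hb E]]]]]]; right; right; exists M, K.
  - repeat split; auto; exists (Sign (Blind M Rr) K); auto.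
  - repeat split; eauto using pst_psubterm.
  - injection E; intros <- <-; repeat split; auto.
    eapply pst_psubterm; [exact Ha|]; apply ps_imm; simpl; auto.
Qed.

Fixpoint size (t : term) : nat :=
  match t with
  | Name _ | Var _ => 1
  | Pub a => S (size a)
  | Sign a b | Blind a b | Pair a b | Enc a b => S (size a + size b)
  | Fun _ args => S (list_sum (map size args))
  end.

Lemma imm_size (c t : term) : imm c t -> size c < size t.
Proof.
  destruct t; simpl; intros H; try tauto; try (destruct H); subst; try lia.
  enough (size c <= list_sum (map size l)) by lia.
  induction l as [|a l IH]; simpl in *; [tauto|].
  destruct H as [->|H]; [lia|specialize (IH H); lia].
Qed.

Lemma psubterm_size (s t : term) : psubterm s t -> size s < size t.
Proof. induction 1 as [c t Hi|s c t _ IH Hi]; pose proof (imm_size _ _ Hi); lia. Qed.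

End Subterms.

Section Shortening.
Variable F : Type.
Variable arity : F -> nat.
Variable oplus : option F.
Variable R : term F -> term F -> Prop.
Local Notation term := (term F).
Local Notation Rder := (Rder arity oplus R).
Local Notation Lstep := (Lstep arity oplus R).
Local Notation Lderiv := (Lderiv arity oplus R).

Lemma Rder_incl (G H : list term) T : Rder G T -> incl G H -> Rder H T.
Proof.
  induction 1; intros HGH.
  - eapply R_id; eauto.
  - apply R_pair; auto.
  - apply R_enc; auto.
  - apply R_sign; auto.
  - apply R_blind; auto.
Qed.

Lemma set_ext_eq (G G' H : list term) extra :
  set_ext G' G extra -> (forall t, In t G <-> In t H) -> set_ext G' H extra.
Proof. unfold set_ext; intros E HGH t; rewrite E, HGH; tauto. Qed.

Lemma Lstep_eq_ctx (G G' H : list term) T :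
  Lstep G G' T -> (forall t, In t G <-> In t H) -> Lstep H G' T.
Proof.
  intros Hs HGH.
  assert (HR : forall X, Rder G X -> Rder H X).
  { intros X HX; apply Rder_incl with G; auto; intros t; apply HGH. }
  destruct Hs.
  - eapply L_lp; eauto using set_ext_eq; apply HGH; auto.
  - eapply L_le; eauto using set_ext_eq; apply HGH; auto.
  - eapply L_sign; eauto using set_ext_eq; apply HGH; auto.
  - eapply L_blind1; eauto using set_ext_eq; apply HGH; auto.
  - eapply L_blind2; eauto using set_ext_eq; apply HGH; auto.
  - eapply L_ls; eauto using set_ext_eq.
    destruct H1 as [u [[Hu|Hu] Hsub]]; exists u; split; auto; left; apply HGH; auto.
Qed.

Lemma Lderiv_eq_ctx (G H : list term) T n :
  Lderiv G T n -> (forall t, In t G <-> In t H) -> Lderiv H T n.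
Proof.
  intros Hd HGH.
  assert (Hok : forall t, In t H \/ t = T -> In t G \/ t = T) by (intros t; rewrite HGH; auto).
  destruct Hd as [G T HokG HRd | G G' T n HokG Hs Hd].
  - apply Ld_r; [intros t Ht; apply HokG, Hok, Ht|].
    apply Rder_incl with G; auto; intros t; apply HGH.
  - apply Ld_step with G'; [intros t Ht; apply HokG, Hok, Ht| |auto].
    eapply Lstep_eq_ctx; eauto.
Qed.

Lemma Lstep_incl (G G' : list term) T : Lstep G G' T -> incl G G'.
Proof.
  destruct 1; unfold set_ext in *; intros t Ht;
    match goal with E : forall t, In t G' <-> _ |- _ => apply E; auto end.
Qed.

(* The (blind_2) rule is the only one adding a term that is not a subterm of
   the sequent; it adds [sign(M,K)], still in St. *)
Lemma Lstep_premise_terms (G G' : list term) T :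
  Lstep G G' T -> forall t, In t G' ->
  In t G \/ (exists u, In u G /\ psubterm t u) \/
  (exists M Rr K, In (Sign (Blind M Rr) K) G /\ t = Sign M K) \/
  (subterm t T /\ Rder G t).
Proof.
  assert (Himm : forall c u, In u G -> imm c u -> exists u, In u G /\ psubterm c u)
    by (intros c u Hu Hi; exists u; split; [exact Hu|apply ps_imm, Hi]).
  destruct 1; unfold set_ext in *; intros t Ht;
    match goal with E : forall t, In t G' <-> _ |- _ => apply E in Ht end;
    (destruct Ht as [Ht|Ht]; [auto|]); simpl in Ht.
  - destruct Ht as [<-|[<-|[]]]; right; left; eapply Himm; eauto; simpl; auto.
  - destruct Ht as [<-|[<-|[]]]; right; left; eapply Himm; eauto; simpl; auto.
  - destruct Ht as [<-|[]]; right; left; eapply Himm; [exact H|]; simpl; auto.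
  - destruct Ht as [<-|[<-|[]]]; right; left; eapply Himm; eauto; simpl; auto.
  - destruct Ht as [<-|[<-|[]]].
    + right; right; left; eauto 6.
    + right; left; exists (Sign (Blind M Rr) K); split; auto.
      apply (@ps_trans _ Rr (Blind M Rr)); [apply ps_imm|]; simpl; auto.
  - destruct Ht as [<-|[]]. destruct H0 as [u [[Hu|<-] [<-|Hsub]]].
    + auto.
    + eauto.
    + right; right; right; split; [left|]; auto.
    + right; right; right; split; [right|]; auto.
Qed.

Lemma Lstep_St (D G G' : list term) T :
  Lstep G G' T -> (forall t, In t G -> St D t) -> St D T ->
  forall t, In t G' -> St D t.
Proof.
  intros Hs HG HT t Ht.
  destruct (Lstep_premise_terms Hs _ Ht)
    as [Hin|[[u [Hu Hsub]]|[[M [Rr [K [Hb ->]]]]|[Hsub _]]]].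
  - auto.
  - apply St_psubterm with u; auto.
  - apply St_sign_unblind with Rr; auto.
  - apply St_subterm with T; auto.
Qed.

Lemma Lstep_size (G G' : list term) T :
  Lstep G G' T -> (forall t, In t G -> size t < size T) ->
  Rder G T \/ (forall t, In t G' -> size t < size T).
Proof.
  intros Hs HG.
  destruct (classic (Rder G T)) as [HRd|HnRd]; [left; exact HRd|right].
  intros t Ht.
  destruct (Lstep_premise_terms Hs _ Ht)
    as [Hin|[[u [Hu Hsub]]|[[M [Rr [K [Hb ->]]]]|[[<-|Hsub] HRd]]]].
  - auto.
  - pose proof (psubterm_size Hsub); pose proof (HG u Hu); lia.
  - specialize (HG _ Hb); simpl in *; lia.
  - contradiction.
  - apply psubterm_size; auto.
Qed.

(* Steps whose premise context adds nothing new are dropped; every other step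
   adds an element of [l] to the context. *)
Lemma Lderiv_shorten (P : list term -> Prop) (l : list term) (b : nat) T :
  (forall G G', P G -> Lstep G G' T -> Rder G T \/ P G') ->
  (forall G t, P G -> In t G -> In t l) ->
  (forall G, P G -> count_in l G <= b) ->
  forall G n, Lderiv G T n -> P G ->
  exists n', n' + count_in l G <= b + 1 /\ Lderiv G T n'.
Proof.
  intros Hstep Hl Hb G n Hd.
  induction Hd as [G T Hok HRd | G G' T n Hok Hs Hd IH]; intros HP;
    pose proof (Hb G HP).
  - exists 1; split; [lia|constructor; auto].
  - destruct (Hstep G G' HP Hs) as [HRd|HP'].
    { exists 1; split; [lia|constructor; auto]. }
    destruct (IH Hstep HP') as [n'' [Hn'' Hd'']].
    pose proof (Lstep_incl Hs) as Hincl.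
    destruct (classic (incl G' G)) as [Hback|Hnew].
    + assert (E : forall t, In t G' <-> In t G) by (split; auto).
      exists n''; split.
      * rewrite (count_in_ext l G G'); [lia|intros t; symmetry; apply E].
      * eapply Lderiv_eq_ctx; eauto.
    + apply not_all_ex_not in Hnew; destruct Hnew as [e He].
      apply imply_to_and in He; destruct He as [HeG' HeG].
      assert (count_in l G < count_in l G')
        by (apply count_in_lt with e; eauto).
      exists (S n''); split; [lia|]. eapply Ld_step; eauto.
Qed.

Lemma Lderiv_shorten_St (D l G : list term) T n :
  (forall t, In t l <-> St D t) -> St D T -> (forall t, In t G -> St D t) ->
  Lderiv G T n -> exists n', n' + count_in l G <= length l + 1 /\ Lderiv G T n'.
Proof.
  intros Hl HT HG Hd.
  apply Lderiv_shorten with (fun G' => forall t, In t G' -> St D t) n; auto.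
  - intros G1 G2 H1 Hs; right; exact (Lstep_St Hs H1 HT).
  - intros G1 t H1 Ht; apply Hl, H1, Ht.
  - intros; apply count_in_le_length.
Qed.

Lemma Lderiv_shorten_St_nil (D l : list term) T n :
  (forall t, In t l <-> St D t) -> St D T ->
  Lderiv [] T n -> exists n', n' <= length l /\ Lderiv [] T n'.
Proof.
  intros Hl HT Hd.
  assert (HTl : In T l) by (apply Hl, HT).
  (* Contexts stay strictly below [T] in size, so [T] is never counted. *)
  set (P := fun G' => forall t, In t G' -> St D t /\ size t < size T).
  destruct (@Lderiv_shorten P l (length l - 1) T)
    with (G := @nil term) (n := n) as [n' [Hn' Hd']]; auto.
  - intros G1 G2 H1 Hs.
    destruct (Lstep_size Hs (fun t Ht => proj2 (H1 t Ht))) as [HRd|Hs2]; [left; auto|right].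
    intros t Ht; split; [|auto].
    exact (Lstep_St Hs (fun t Ht => proj1 (H1 t Ht)) HT t Ht).
  - intros G1 t H1 Ht; apply Hl, H1, Ht.
  - intros G1 H1.
    enough (count_in l G1 < length l) by lia.
    apply count_in_lt_length with T; auto.
    intros Hin; specialize (H1 T Hin); lia.
  - intros t [].
  - exists n'; split; [|exact Hd'].
    destruct l; simpl in *; [contradiction|lia].
Qed.

End Shortening.

Unset Implicit Arguments.

Theorem lemma6 (F : Type) (arity : F -> nat) (oplus : option F)
    (R : term F -> term F -> Prop)
    (Hoplus : forall f, oplus = Some f -> arity f = 2)
    (HR : forall l r, R l r -> is_rewrite_rule arity l r)
    (Hterm : terminating_AC oplus R)
    (Hconf : confluent_AC oplus R)
    (G : list (term F)) (M : term F) (n : nat) :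
  Lderiv arity oplus R G M n ->
  forall (l : list (term F)),
    NoDup l -> (forall t, In t l <-> St (M :: G) t) ->
    exists n', n' <= length l /\ Lderiv arity oplus R G M n'.
Proof.
  intros Hd l _ Hl.
  assert (HM : St (M :: G) M) by (left; left; reflexivity).
  assert (HG : forall t, In t G -> St (M :: G) t) by (intros t Ht; left; right; exact Ht).
  destruct G as [|g G0].
  - exact (Lderiv_shorten_St_nil l Hl HM Hd).
  - destruct (Lderiv_shorten_St l Hl HM HG Hd) as [n' [Hn' Hd']].
    assert (0 < count_in l (g :: G0))
      by (apply count_in_pos with g; [apply Hl, HG|]; left; auto).
    exists n'; split; [lia|exact Hd'].
Qed.
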